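(* Let $K$ be a number field, $0<\alpha<1$, and suppose there is $\mathcal{C}_K>0$ with $|f_1(x,K)|\leq\mathcal{C}_K x^{\alpha}$ for all $x\geq1$. Then for all $x\geq1$, $$|f_2(x,K)|\leq\mathcal{C}_K x^{\alpha}\left(\log x+\frac{1-x^{-\alpha}}{\alpha}\right).$$
   Context: Write $\zeta_K(s)=\sum_{n\geq1}c_K(n)n^{-s}$ for the Dedekind zeta function of $K$ ($c_K(n)$ = number of ideals of $\mathcal{O}_K$ of norm $n$) and $\rho_K$ for its residue at $s=1$. Define $f_1(x,K):=\sum_{n\leq x}c_K(n)-\rho_K x$ and $f_2(x,K):=\sum_{n\leq x}c_K(n)\log n-\rho_K(x\log x-x+1)$. *)

From HB Require Import structures.
From mathcomp Require Import all_boot all_order all_algebra all_field.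
From mathcomp Require Import all_classical all_reals all_analysis.
From mathcomp Require Import finmap.
Set Implicit Arguments. Unset Strict Implicit. Unset Printing Implicit Defensive.
Import Order.TTheory GRing.Theory Num.Theory numFieldNormedType.Exports.
Local Open Scope classical_set_scope.
Local Open Scope ring_scope.

Section NumberField.
Variable K : fieldExtType rat.

Definition OK (x : K) : Prop :=
  exists p : {poly int}, p \is monic /\ root (map_poly (fun z : int => z%:~R : K) p) x.

Definition is_ideal (I : set K) : Prop :=
  [/\ I `<=` OK, I 0,
      (forall a b, I a -> I b -> I (a - b)) &
      (forall r a, OK r -> I a -> I (r * a))].

(* Absolute norm: N(I) = n iff O_K/I has exactly n elements, i.e. there are n
   elements of O_K pairwise incongruent mod I representing every class.
   (The zero ideal has no finite norm.) *)
Definition has_norm (I : set K) (n : nat) : Prop :=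
  exists s : seq K,
    [/\ size s = n, (forall r, r \in s -> OK r),
        (forall i j, (i < n)%N -> (j < n)%N -> I (s`_i - s`_j) -> i = j) &
        (forall a, OK a -> exists2 i, (i < n)%N & I (a - s`_i))].

Definition ideals_of_norm (n : nat) : set (set K) :=
  [set I : set K | is_ideal I /\ has_norm I n].

(* (fset_set of a finite set is that set as a finite set; the set is finite.) *)
Definition cK (n : nat) : nat := size (enum_fset (fset_set (ideals_of_norm n))).

Variable R : realType.

Definition zetaK (s : R) : R :=
  limn (fun N : nat => \sum_(1 <= n < N) ((cK n)%:R * (n%:R `^ (- s)))).

Definition rhoK : R := lim ((fun s : R => (s - 1) * zetaK s) @ (1 : R)^'+).

Definition f1 (x : R) : R :=
  \sum_(1 <= n < (Num.truncn x).+1) (cK n)%:R - rhoK * x.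

Definition f2 (x : R) : R :=
  \sum_(1 <= n < (Num.truncn x).+1) (cK n)%:R * ln (n%:R : R)
  - rhoK * (x * ln x - x + 1).

End NumberField.

(* With S(t) = sum_(n <= t) c_K(n), so that f_1(t) = S(t) - rho t, Abel summation gives
   f_2(x) = f_1(x) log x - int_1^x f_1(t)/t dt; the first term is at most C x^a log x and
   the integral at most int_1^x C t^(a-1) dt = C (x^a - 1)/a.  No integral is formed:
   on each [k, k+1] the sum S is a constant A, the remainder's variation there is that of
   A log t - rho t, whose derivative (A - rho t)/t is dominated by C t^(a-1), the derivative
   of C t^a / a; and the remainder does not jump at the integers. *)
From HB Require Import structures.
From mathcomp Require Import all_boot all_order all_algebra all_field.
From mathcomp Require Import all_classical all_reals all_analysis.
From mathcomp Require Import ring lra.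
Set Implicit Arguments. Unset Strict Implicit. Unset Printing Implicit Defensive.
Import Order.TTheory GRing.Theory Num.Theory numFieldNormedType.Exports.
Local Open Scope classical_set_scope.
Local Open Scope ring_scope.

Section DerivativeDomination.
Variable R : realType.

Lemma ler_norm_sub_derive (f g df dg : R -> R) (a b : R) :
  a <= b ->
  (forall x, x \in `]a, b[ -> is_derive x 1 f (df x)) ->
  (forall x, x \in `]a, b[ -> is_derive x 1 g (dg x)) ->
  {within `[a, b], continuous f} -> {within `[a, b], continuous g} ->
  (forall x, x \in `]a, b[ -> `|df x| <= dg x) ->
  `|f b - f a| <= g b - g a.
Proof.
move=> ab fd gd fc gc dfg.
have [<-|neab] := eqVneq a b; first by rewrite !subrr normr0.
have {ab neab} ab : a < b by rewrite lt_neqAle neab.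
have incr (h dh : R -> R) : (forall x, x \in `]a, b[ -> is_derive x 1 h (dh x)) ->
    {within `[a, b], continuous h} -> (forall x, x \in `]a, b[ -> 0 <= dh x) ->
    h a <= h b.
  move=> hd hc dh0; rewrite -subr_ge0; have [x xab ->] := MVT ab hd hc.
  by rewrite mulr_ge0 ?dh0 // subr_ge0 ltW.
have gBf : (g - f) a <= (g - f) b.
  apply: (incr _ (fun x => dg x - df x)).
  - by move=> x xab; apply: is_deriveB; [exact: gd | exact: fd].
  - by move=> x; exact: (continuousB (gc x) (fc x)).
  - by move=> x /dfg; rewrite ler_norml => /andP[]; lra.
have gDf : (g + f) a <= (g + f) b.
  apply: (incr _ (fun x => dg x + df x)).
  - by move=> x xab; apply: is_deriveD; [exact: gd | exact: fd].
  - by move=> x; exact: (continuousD (gc x) (fc x)).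
  - by move=> x /dfg; rewrite ler_norml => /andP[]; lra.
by move: gBf gDf; rewrite !fctE ler_norml => ? ?; apply/andP; split; lra.
Qed.

Lemma ler_norm_sub_log_linear (A rho C al k t : R) :
  0 < k -> k <= t -> 0 < al ->
  (forall s, k < s -> s < t -> `|A - rho * s| <= C * s `^ al) ->
  `|(A * ln t - rho * t) - (A * ln k - rho * k)| <= C / al * (t `^ al - k `^ al).
Proof.
move=> k0 kt al0 hA; rewrite mulrBr.
have pos (x : R) : k <= x -> 0 < x := lt_le_trans k0.
have open_pos (x : R) : x \in `]k, t[ -> 0 < x.
  by rewrite in_itv /= => /andP[/ltW/pos].
have fd (x : R) : 0 < x -> is_derive x 1 (fun s => A * ln s - rho * s) (A / x - rho).
  move=> x0; apply: is_derive_eq.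
    exact: (is_deriveB (is_deriveZ A (is_derive1_ln x0)) (is_deriveZ rho (is_derive_id x 1))).
  by rewrite /GRing.scale /= mulr1.
have gd (x : R) : 0 < x -> is_derive x 1 (fun s => C / al * s `^ al) (C * x `^ al / x).
  move=> x0; have -> : C * x `^ al / x = C / al * (al * x `^ (al - 1)).
    by rewrite powRB ?(gt_eqF x0, implybT) // powRr1 ?ltW //; field; rewrite !gt_eqF.
  exact: (is_deriveZ (C / al) (is_derive1_powR al x0)).
have fc : {within `[k, t], continuous (fun s => A * ln s - rho * s)}.
  apply: derivable_within_continuous => x; rewrite in_itv /= => /andP[/pos x0 _].
  by case: (fd x x0).
have gc : {within `[k, t], continuous (fun s => C / al * s `^ al)}.
  apply: derivable_within_continuous => x; rewrite in_itv /= => /andP[/pos x0 _].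
  by case: (gd x x0).
have dom x : x \in `]k, t[ -> `|A / x - rho| <= C * x `^ al / x.
  move=> xkt; have x0 := open_pos x xkt.
  have -> : A / x - rho = (A - rho * x) / x by field; rewrite gt_eqF.
  rewrite normrM normfV (gtr0_norm x0) ler_pM2r ?invr_gt0 //.
  by move: xkt; rewrite in_itv /= => /andP[kx xt]; apply: hA.
exact: (ler_norm_sub_derive kt (fun x xkt => fd x (open_pos x xkt))
  (fun x xkt => gd x (open_pos x xkt)) fc gc dom).
Qed.
End DerivativeDomination.

Section AbelSummation.
Variables (R : realType) (c : nat -> R) (rho C al : R).
Hypothesis al_gt0 : 0 < al.

Definition count_sum (k : nat) : R := \sum_(1 <= n < k.+1) c n.

(* abel_rem (truncn t) t = - int_1^t (count_sum (truncn u) - rho u) / u du. *)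
Definition abel_rem (k : nat) (t : R) : R :=
  \sum_(1 <= n < k.+1) c n * ln n%:R - count_sum k * ln t + rho * (t - 1).

Lemma abel_rem_succ (k : nat) : abel_rem k.+1 k.+1%:R = abel_rem k k.+1%:R.
Proof. by rewrite /abel_rem /count_sum !(big_nat_recr k.+1) //=; ring. Qed.

Hypothesis count_bound : forall s : R, 1 <= s ->
  `|count_sum (Num.truncn s) - rho * s| <= C * s `^ al.

Lemma count_bound_on_step (k : nat) (s : R) : (1 <= k)%N ->
  k%:R <= s < k.+1%:R -> `|count_sum k - rho * s| <= C * s `^ al.
Proof.
move=> k1 ks; rewrite -(truncn_def ks); apply: count_bound.
by case/andP: ks => + _; apply: le_trans; rewrite ler1n.
Qed.

Lemma abel_rem_step (k : nat) (t : R) : (1 <= k)%N -> k%:R <= t <= k.+1%:R ->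
  `|abel_rem k t - abel_rem k k%:R| <= C / al * (t `^ al - k%:R `^ al).
Proof.
move=> k1 /andP[kt tk].
have -> : abel_rem k t - abel_rem k k%:R =
    - ((count_sum k * ln t - rho * t) - (count_sum k * ln k%:R - rho * k%:R)).
  by rewrite /abel_rem; ring.
rewrite normrN; apply: ler_norm_sub_log_linear => //; first by rewrite ltr0n.
move=> s ks st; apply: count_bound_on_step => //.
by rewrite (ltW ks) (lt_le_trans st tk).
Qed.

Lemma abel_rem_nat (k : nat) : (1 <= k)%N ->
  `|abel_rem k k%:R| <= C / al * (k%:R `^ al - 1).
Proof.
elim: k => [//|[_ _|k IH _]].
  by rewrite /abel_rem /count_sum big_nat1 ln1 powR1 !(mulr0, subrr, addr0, normr0).
rewrite abel_rem_succ -[abel_rem _ _](subrK (abel_rem k.+1 k.+1%:R)).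
apply: le_trans (ler_normD _ _) _.
have -> : C / al * (k.+2%:R `^ al - 1) =
    C / al * (k.+2%:R `^ al - k.+1%:R `^ al) + C / al * (k.+1%:R `^ al - 1) by ring.
apply: lerD; last exact: IH.
by apply: abel_rem_step => //; rewrite ler_nat leqnSn lexx.
Qed.

Lemma abel_rem_bound (x : R) : 1 <= x ->
  `|abel_rem (Num.truncn x) x| <= C / al * (x `^ al - 1).
Proof.
move=> x1; set k := Num.truncn x.
have k1 : (1 <= k)%N by rewrite truncn_gt0.
have /andP[kx xk] := truncn_itv (le_trans ler01 x1).
rewrite -[abel_rem _ _](subrK (abel_rem k k%:R)).
apply: le_trans (ler_normD _ _) _.
have -> : C / al * (x `^ al - 1) =
    C / al * (x `^ al - k%:R `^ al) + C / al * (k%:R `^ al - 1) by ring.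
apply: lerD; last exact: abel_rem_nat.
by apply: abel_rem_step => //; rewrite kx ltW.
Qed.

End AbelSummation.

Theorem lemma2 (K : fieldExtType rat) (R : realType) (alpha CK : R) :
  0 < alpha -> alpha < 1 -> 0 < CK ->
  (forall x : R, 1 <= x -> `|f1 K x| <= CK * x `^ alpha) ->
  forall x : R, 1 <= x ->
    `|f2 K x| <= CK * x `^ alpha * (ln x + (1 - x `^ (- alpha)) / alpha).
Proof.
move=> alpha_gt0 _ _ f1_bound x x1.
pose c n : R := (cK K n)%:R; pose k := Num.truncn x.
have -> : f2 K x = (count_sum c k - rhoK K R * x) * ln x + abel_rem c (rhoK K R) k x.
  by rewrite /f2 /abel_rem; ring.
have -> : CK * x `^ alpha * (ln x + (1 - x `^ (- alpha)) / alpha) =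
    CK * x `^ alpha * ln x + CK / alpha * (x `^ alpha - 1).
  rewrite powRN; field.
  by rewrite (gt_eqF alpha_gt0) (gt_eqF (powR_gt0 _ (lt_le_trans ltr01 x1))).
apply: le_trans (ler_normD _ _) _; apply: lerD.
- by rewrite normrM (ger0_norm (ln_ge0 x1)) ler_wpM2r ?ln_ge0 ?f1_bound.
- exact: (abel_rem_bound alpha_gt0 f1_bound x1).
Qed.
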